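(* The set $\mathcal{IFR}$ of relay rules (Relay Introduction, Relay Fusion, Relay Reversal) preserves weak connectivity: if any rule of $\mathcal{IFR}$ is applied to a weakly connected (valid) relay graph $G$, then the resulting relay graph $G'$ is also weakly connected.
   Context: Relay model. There is a set $P$ of processes. Each process owns a set of relays (owned non-transferably). Every relay $r$ has exactly one outgoing connection: either $r$ is a sink relay (its messages are delivered to its owning process) or its outgoing connection points to another relay. Following outgoing connections from any relay never cycles and ends at a unique sink relay; the owner of that sink relay is called the sink process of $r$. A process $u$ ''has a relay $r$ to'' a process $v$ if $u$ owns $r$ (or a message in transit to $u$ will give it such a relay upon receipt) and $v$ is the sink process of $r$. $\mathrm{incoming}(r)$ is the number of connections into $r$ (relays pointing to $r$, including pending ones created by references to $r$ in transit); $\mathrm{same\text{-}target}(r,r')$ holds iff $r$ and $r'$ have the same outgoing target. A process may at any time create a new sink relay with no incoming connections. When a process $u$ sends (a reference to) a relay $s$ it owns via a relay $r$ it owns, the message travels along the chain of relays starting at $r$; upon receipt, the sink process of $r$ obtains a new relay $s'$ whose outgoing connection points to $s$ (so $\mathrm{incoming}(s)$ increases). Deleting a relay removes it and its outgoing connection (after pending messages have been delivered). Merging relays with the same target and no incoming connections replaces them by a single relay with that target. Relay graph: directed graph with vertex set $P\cup R$ ($R$ the set of relays) and edges: $(v,r)$ if process $v$ owns relay $r$; $(r,w)$ for relays $r,w$ if the outgoing connection of $r$ points to $w$; $(r,w)$ for a sink relay $r$ and its owning process $w$ (explicit edges); and an implicit edge $(r,w)$ between relays if a message waiting in $r$'s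 outgoing buffer contains a reference to $w$. Weak connectivity refers to the underlying undirected graph. Rules $\mathcal{IFR}$: (Relay Introduction) if $u$ has a relay $r$ to $v$ and a relay $s$ to $w$, then $u$ may send $s$ to $v$ via $r$ (keeping all relays). (Relay Fusion) if $u$ has two relays $r,r'$ with $\mathrm{same\text{-}target}(r,r')$, $u$ may merge them. (Relay Reversal) if $u$ has two relays $r\neq s$ with $\mathrm{incoming}(r)=0$, $u$ may send $s$ via $r$ and subsequently delete $r$. *)

From mathcomp Require Import all_boot.
From Stdlib Require Import Relations.Relation_Operators.

Set Implicit Arguments.
Unset Strict Implicit.
Unset Printing Implicit Defensive.

(* A relay graph (global state) over a set of processes P.
   Relays are identified by natural numbers; [relays] lists the existing ones.
   [owner r]  : the process owning relay r;
   [target r] : None if r is a sink relay, Some w if r's outgoing connection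
                points to relay w;
   [buffer r] : the relay references contained in the messages waiting in
                r's outgoing buffer. *)
Record relay_graph (P : Type) := RelayGraph {
  relays : seq nat;
  owner  : nat -> P;
  target : nat -> option nat;
  buffer : nat -> seq nat
}.

Inductive vertex (P : Type) := VProc of P | VRelay of nat.
Arguments VProc {P} _.
Arguments VRelay {P} _.

Definition is_vertex (P : Type) (G : relay_graph P) (x : vertex P) : Prop :=
  match x with VProc _ => True | VRelay r => r \in relays G end.

Inductive edge (P : Type) (G : relay_graph P) : vertex P -> vertex P -> Prop :=
| E_own r : r \in relays G -> edge G (VProc (owner G r)) (VRelay r)
| E_out r w : r \in relays G -> w \in relays G -> target G r = Some w ->
    edge G (VRelay r) (VRelay w)
| E_sink r : r \in relays G -> target G r = None ->
    edge G (VRelay r) (VProc (owner G r))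
| E_impl r w : r \in relays G -> w \in relays G -> w \in buffer G r ->
    edge G (VRelay r) (VRelay w).

Definition weakly_connected (P : Type) (G : relay_graph P) : Prop :=
  forall x y, is_vertex G x -> is_vertex G y ->
    clos_refl_sym_trans (vertex P) (edge G) x y.

(* [sink_of G r v]: following outgoing connections from r ends at a sink
   relay owned by v (inductive, hence finite: no cycle). *)
Inductive sink_of (P : Type) (G : relay_graph P) : nat -> P -> Prop :=
| SO_here r : r \in relays G -> target G r = None -> sink_of G r (owner G r)
| SO_step r w v : r \in relays G -> target G r = Some w -> sink_of G w v ->
    sink_of G r v.

Definition valid (P : Type) (G : relay_graph P) : Prop :=
  [/\ uniq (relays G),
      (forall r w, r \in relays G -> target G r = Some w -> w \in relays G),
      (forall r w, r \in relays G -> w \in buffer G r -> w \in relays G) &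
      (forall r, r \in relays G -> exists v, sink_of G r v)].

Definition has_relay (P : Type) (G : relay_graph P) (u : P) (r : nat) (v : P)
  : Prop := [/\ r \in relays G, owner G r = u & sink_of G r v].

(* incoming(r): relays pointing to r plus pending connections created by
   references to r in transit. *)
Definition incoming (P : Type) (G : relay_graph P) (r : nat) : nat :=
  count (fun x => target G x == Some r) (relays G)
  + sumn [seq count_mem r (buffer G x) | x <- relays G].

Definition same_target (P : Type) (G : relay_graph P) (r r' : nat) : Prop :=
  target G r = target G r'.

Definition upd (T : Type) (f : nat -> T) (a : nat) (b : T) : nat -> T :=
  fun x => if x == a then b else f x.

(* Relay Introduction: s is sent via r (message with a reference to s put
   into r's outgoing buffer); all relays are kept. *)
Definition intro_result (P : Type) (G : relay_graph P) (r s : nat) :=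
  RelayGraph (relays G) (owner G) (target G)
             (upd (buffer G) r (rcons (buffer G r) s)).

Definition fuse_result (P : Type) (G : relay_graph P) (u : P) (r r' n : nat) :=
  RelayGraph (n :: [seq x <- relays G | (x != r) && (x != r')])
             (upd (owner G) n u)
             (upd (target G) n (target G r))
             (upd (buffer G) n (buffer G r ++ buffer G r')).

(* Relay Reversal: s is sent via r, then r is deleted after its pending
   messages (the old ones and the new one) have been delivered: the sink
   process v of r obtains, for each reference x in those messages, a fresh
   relay (from ns) pointing to x. *)
Definition rev_result (P : Type) (G : relay_graph P) (r s : nat) (v : P)
    (ns : seq nat) :=
  let msgs := rcons (buffer G r) s in
  RelayGraph (ns ++ [seq x <- relays G | x != r])
             (fun x => if x \in ns then v else owner G x)
             (fun x => if x \in ns then Some (nth 0 msgs (index x ns))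
                       else target G x)
             (fun x => if x \in ns then [::] else buffer G x).

Inductive ifr_step (P : Type) (G : relay_graph P) : relay_graph P -> Prop :=
| IFR_intro u r v s w :
    has_relay G u r v -> has_relay G u s w ->
    ifr_step G (intro_result G r s)
| IFR_fuse u r r' v v' n :
    has_relay G u r v -> has_relay G u r' v' -> r != r' ->
    same_target G r r' -> incoming G r = 0 -> incoming G r' = 0 ->
    n \notin relays G ->
    ifr_step G (fuse_result G u r r' n)
| IFR_rev u r s v w ns :
    has_relay G u r v -> has_relay G u s w -> r != s ->
    incoming G r = 0 ->
    size ns = (size (buffer G r)).+1 -> uniq ns ->
    all (fun n => n \notin relays G) ns ->
    ifr_step G (rev_result G r s v ns).

From mathcomp Require Import all_boot.
From Stdlib Require Import Relations.Relation_Operators.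

Set Implicit Arguments.
Unset Strict Implicit.
Unset Printing Implicit Defensive.

(* Each rule is simulated by a map from the vertices of G to those of G' that
   sends every edge of G to a pair of vertices connected in G', and whose
   image meets every connected component of G'.  Introduction only adds an
   implicit edge.  Fusion identifies r and r' with the new relay n, which
   inherits their owner, target and buffers; as no connection points to r or
   r', every edge of G survives in this quotient.  Reversal
   sends the deleted relay r to its sink process v: v owns the fresh relays
   pointing to s (which u owns) and to the references that were buffered in r,
   and since no connection points to r, the chain from the successor of r to
   its sink v survives the deletion. *)

Lemma clos_rst_map (A B : Type) (R : A -> A -> Prop) (S : B -> B -> Prop)
    (f : A -> B) x y :
  (forall a b, R a b -> clos_refl_sym_trans B S (f a) (f b)) ->
  clos_refl_sym_trans A R x y -> clos_refl_sym_trans B S (f x) (f y).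
Proof.
move=> fR; elim=> [a b /fR //|a|a b _ IH|a b c _ IH1 _ IH2].
- exact: rst_refl.
- exact: rst_sym.
- exact: rst_trans IH1 IH2.
Qed.

Section WeakConnectivity.

Variable P : Type.
Implicit Types (G : relay_graph P) (k r w : nat).
Local Notation connected G := (clos_refl_sym_trans (vertex P) (edge G)).

Lemma incoming0_target G r k w :
  incoming G r = 0 -> k \in relays G -> target G k = Some w -> w != r.
Proof.
rewrite /incoming => /eqP; rewrite addn_eq0 -leqn0 leqNgt -has_count.
case/andP=> /hasPn no_target _ k_in /eqP tk.
by apply: contraTneq tk => ->; apply: no_target.
Qed.

Lemma incoming0_buffer G r k w :
  incoming G r = 0 -> k \in relays G -> w \in buffer G k -> w != r.
Proof.
rewrite /incoming => /eqP; rewrite addn_eq0 => /andP[_].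
rewrite (map_comp (count_mem r) (buffer G)) -count_flatten.
move=> /eqP/count_memPn no_ref k_in wb; apply: contraTneq wb => ->.
by apply: contra no_ref => rb; apply/flatten_mapP; exists k.
Qed.

Lemma sink_of_target G r w v :
  sink_of G r v -> target G r = Some w -> sink_of G w v.
Proof. by case=> [r' _ -> //|r' w' v' _ -> sink_w' [<-]]. Qed.

Lemma weakly_connected_transfer G G' (f : vertex P -> vertex P) :
  (forall a b, edge G a b -> connected G' (f a) (f b)) ->
  (forall y, is_vertex G' y ->
     exists2 x, is_vertex G x & connected G' (f x) y) ->
  weakly_connected G -> weakly_connected G'.
Proof.
move=> f_edge f_onto G_conn y1 y2 /f_onto[x1 x1_in c1] /f_onto[x2 x2_in c2].
apply: rst_trans (rst_sym _ _ _ _ c1) (rst_trans _ _ _ _ _ _ c2).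
exact: clos_rst_map (G_conn _ _ x1_in x2_in).
Qed.

Definition relay_map (f : nat -> nat) (x : vertex P) : vertex P :=
  if x is VRelay k then VRelay (f k) else x.

Lemma relay_map_edge G G' (f : nat -> nat) :
  {in relays G, forall k, f k \in relays G'} ->
  {in relays G, forall k, owner G' (f k) = owner G k} ->
  {in relays G, forall k, target G' (f k) = omap f (target G k)} ->
  (forall k w, k \in relays G -> w \in buffer G k -> f w \in buffer G' (f k)) ->
  forall a b, edge G a b -> edge G' (relay_map f a) (relay_map f b).
Proof.
move=> f_in f_owner f_target f_buffer a b.
case=> [k k_in|k w k_in w_in tk|k k_in tk|k w k_in w_in wb] /=.
- by rewrite -f_owner //; apply: E_own; apply: f_in.
- by apply: E_out; [apply: f_in | apply: f_in | rewrite f_target // tk].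
- by rewrite -f_owner //; apply: E_sink; [apply: f_in | rewrite f_target // tk].
- by apply: E_impl; [apply: f_in | apply: f_in | apply: f_buffer].
Qed.

Section Rules.

Variable G : relay_graph P.
Hypothesis target_closed :
  forall k w, k \in relays G -> target G k = Some w -> w \in relays G.
Hypothesis buffer_closed :
  forall k w, k \in relays G -> w \in buffer G k -> w \in relays G.

Lemma intro_result_edge r s a b : edge G a b -> edge (intro_result G r s) a b.
Proof.
case=> [k k_in|k w k_in w_in tk|k k_in tk|k w k_in w_in wb].
- exact: E_own.
- exact: E_out.
- exact: E_sink.
apply: E_impl => //=; rewrite /upd; case: eqP => [<-|//].
by rewrite mem_rcons inE wb orbT.
Qed.

Lemma intro_result_weakly_connected r s :
  weakly_connected G -> weakly_connected (intro_result G r s).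
Proof.
apply: (weakly_connected_transfer (f := id)) => [a b ab|y y_in].
  exact/rst_step/intro_result_edge.
by exists y; [case: y y_in | apply: rst_refl].
Qed.

Section Fusion.

Variables (u : P) (r r' n : nat).
Hypotheses (r_in : r \in relays G) (owner_r : owner G r = u).
Hypothesis owner_r' : owner G r' = u.
Hypothesis same_rr' : same_target G r r'.
Hypotheses (incoming_r : incoming G r = 0) (incoming_r' : incoming G r' = 0).
Hypothesis n_fresh : n \notin relays G.

Local Notation G' := (fuse_result G u r r' n).

Definition fuse_relay k := if (k == r) || (k == r') then n else k.

Lemma fuse_relay_id k : k != r -> k != r' -> fuse_relay k = k.
Proof. by rewrite /fuse_relay => /negbTE-> /negbTE->. Qed.

Lemma fuse_relay_in k : k \in relays G -> fuse_relay k \in relays G'.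
Proof.
move=> k_in; rewrite /fuse_relay /= inE; case: ifP => [_|/negbT].
  by rewrite eqxx.
by rewrite negb_or mem_filter k_in andbT => ->; rewrite orbT.
Qed.

Lemma fuse_result_at (T : Type) (g : nat -> T) (t : T) k : k \in relays G ->
  upd g n t (fuse_relay k) = if (k == r) || (k == r') then t else g k.
Proof.
move=> k_in; rewrite /fuse_relay /upd; case: (_ || _); first by rewrite eqxx.
by have /negbTE-> : k != n by apply: contraNneq n_fresh => <-.
Qed.

Lemma fuse_owner k : k \in relays G -> owner G' (fuse_relay k) = owner G k.
Proof.
by move=> k_in; rewrite /= fuse_result_at //; case: ifP => // /orP[]/eqP->.
Qed.

Lemma fuse_target k :
  k \in relays G -> target G' (fuse_relay k) = omap fuse_relay (target G k).
Proof.
move=> k_in; have -> : omap fuse_relay (target G k) = target G k.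
  case tk: (target G k) => [w|] //=; congr Some.
  by apply: fuse_relay_id;
    [exact: incoming0_target incoming_r k_in tk
    | exact: incoming0_target incoming_r' k_in tk].
by rewrite /= fuse_result_at //; case: ifP => // /orP[]/eqP->.
Qed.

Lemma fuse_buffer k w : k \in relays G -> w \in buffer G k ->
  fuse_relay w \in buffer G' (fuse_relay k).
Proof.
move=> k_in wb; rewrite fuse_relay_id;
  [| exact: incoming0_buffer incoming_r k_in wb
   | exact: incoming0_buffer incoming_r' k_in wb].
by rewrite /= fuse_result_at //; case: ifP => // /orP[]/eqP kr;
  rewrite mem_cat -kr wb ?orbT.
Qed.

Lemma fuse_result_weakly_connected :
  weakly_connected G -> weakly_connected G'.
Proof.
apply: (weakly_connected_transfer (f := relay_map fuse_relay)).
  move=> a b ab; apply: rst_step; move: ab; apply: relay_map_edge.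
  - exact: fuse_relay_in.
  - exact: fuse_owner.
  - exact: fuse_target.
  - exact: fuse_buffer.
move=> [p|k] /=; first by exists (VProc p) => //; apply: rst_refl.
rewrite inE mem_filter => /orP[/eqP->|/andP[/andP[k_r k_r'] k_in]].
  by exists (VRelay r) => //=; rewrite /fuse_relay eqxx; apply: rst_refl.
by exists (VRelay k) => //=; rewrite fuse_relay_id //; apply: rst_refl.
Qed.

End Fusion.

Section Reversal.

Variables (u : P) (r s : nat) (v : P) (ns : seq nat).
Hypotheses (r_in : r \in relays G) (owner_r : owner G r = u).
Hypothesis r_sink : sink_of G r v.
Hypotheses (s_in : s \in relays G) (owner_s : owner G s = u).
Hypothesis r_neq_s : r != s.
Hypothesis incoming_r : incoming G r = 0.
Hypothesis size_ns : size ns = (size (buffer G r)).+1.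
Hypothesis uniq_ns : uniq ns.
Hypothesis ns_fresh : all (fun n => n \notin relays G) ns.

Local Notation G' := (rev_result G r s v ns).
Local Notation msgs := (rcons (buffer G r) s).

Lemma rev_relay_notin k : k \in relays G -> k \notin ns.
Proof. by move=> k_in; apply/negP => /(allP ns_fresh); rewrite k_in. Qed.

Lemma rev_relay_in k : k \in relays G -> k != r -> k \in relays G'.
Proof. by move=> k_in k_r; rewrite /= mem_cat mem_filter k_r k_in orbT. Qed.

Lemma rev_owner k : k \in relays G -> owner G' k = owner G k.
Proof. by move=> k_in; rewrite /= (negbTE (rev_relay_notin k_in)). Qed.

Lemma rev_target k : k \in relays G -> target G' k = target G k.
Proof. by move=> k_in; rewrite /= (negbTE (rev_relay_notin k_in)). Qed.

Lemma rev_buffer k : k \in relays G -> buffer G' k = buffer G k.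
Proof. by move=> k_in; rewrite /= (negbTE (rev_relay_notin k_in)). Qed.

Lemma rev_fresh_owned m : m \in ns -> edge G' (VProc v) (VRelay m).
Proof.
move=> m_in; have owner_m : owner G' m = v by rewrite /= m_in.
by rewrite -[X in VProc X]owner_m; apply: E_own; rewrite /= mem_cat m_in.
Qed.

Lemma rev_msg_connected b : b \in msgs -> connected G' (VRelay b) (VProc v).
Proof.
move=> b_msg; have [b_in b_r] : b \in relays G /\ b != r.
  move: b_msg; rewrite mem_rcons inE => /predU1P[->|b_buf].
    by split; rewrite // eq_sym.
  by split; [exact: buffer_closed b_buf | exact: incoming0_buffer b_buf].
have i_lt : index b msgs < size ns.
  by rewrite size_ns -(size_rcons _ s) index_mem.
pose m := nth 0 ns (index b msgs).
have m_in : m \in ns := mem_nth 0 i_lt.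
have m_to_b : edge G' (VRelay m) (VRelay b).
  apply: E_out; first by rewrite /= mem_cat m_in.
    exact: rev_relay_in.
  by rewrite /= m_in index_uniq // nth_index.
apply: rst_trans (rst_sym _ _ _ _ (rst_step _ _ _ _ m_to_b)) _.
exact/rst_sym/rst_step/rev_fresh_owned.
Qed.

Lemma rev_owner_connected : connected G' (VProc u) (VProc v).
Proof.
apply: (rst_trans _ _ _ (VRelay s)).
  apply: rst_step; rewrite -owner_s -(rev_owner s_in).
  by apply: E_own; apply: rev_relay_in; rewrite // eq_sym.
by apply: rev_msg_connected; rewrite mem_rcons mem_head.
Qed.

Lemma rev_sink_connected k p :
  sink_of G k p -> k != r -> connected G' (VRelay k) (VProc p).
Proof.
elim=> {k p} [k k_in tk|k l p k_in tk _ IH] k_r.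
  apply: rst_step; rewrite -(rev_owner k_in).
  by apply: E_sink; rewrite ?rev_relay_in ?rev_target.
have l_r : l != r := incoming0_target incoming_r k_in tk.
have l_in : l \in relays G := target_closed k_in tk.
apply: rst_trans (IH l_r); apply: rst_step.
by apply: E_out; rewrite ?rev_relay_in ?rev_target.
Qed.

Definition rev_vertex (x : vertex P) : vertex P :=
  if x is VRelay k then (if k == r then VProc v else x) else x.

Lemma rev_edge a b : edge G a b -> connected G' (rev_vertex a) (rev_vertex b).
Proof.
case=> [k k_in|k l k_in l_in tk|k k_in tk|k l k_in l_in lb] /=;
  have [kr|k_r] := eqVneq k r; try subst k.
- by rewrite owner_r; apply: rev_owner_connected.
- apply: rst_step; rewrite -(rev_owner k_in).
  by apply: E_own; apply: rev_relay_in.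
- have l_r : l != r := incoming0_target incoming_r k_in tk.
  rewrite (negbTE l_r); apply: rst_sym; apply: rev_sink_connected => //.
  exact: sink_of_target r_sink tk.
- have l_r : l != r := incoming0_target incoming_r k_in tk.
  rewrite (negbTE l_r); apply: rst_step.
  by apply: E_out; rewrite ?rev_relay_in ?rev_target.
- by rewrite owner_r; apply: rst_sym; apply: rev_owner_connected.
- apply: rst_step; rewrite -(rev_owner k_in).
  by apply: E_sink; rewrite ?rev_relay_in ?rev_target.
- have l_r : l != r := incoming0_buffer incoming_r k_in lb.
  rewrite (negbTE l_r); apply: rst_sym; apply: rev_msg_connected.
  by rewrite mem_rcons inE lb orbT.
- have l_r : l != r := incoming0_buffer incoming_r k_in lb.
  rewrite (negbTE l_r); apply: rst_step.
  by apply: E_impl; rewrite ?rev_relay_in ?rev_buffer.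
Qed.

Lemma rev_result_weakly_connected : weakly_connected G -> weakly_connected G'.
Proof.
apply: (weakly_connected_transfer (f := rev_vertex)) => [|[p|k]].
- exact: rev_edge.
- by exists (VProc p) => //; apply: rst_refl.
- rewrite /= mem_cat mem_filter => /orP[k_new|/andP[k_r k_in]].
    by exists (VProc v) => //; apply/rst_step/rev_fresh_owned.
  by exists (VRelay k) => //=; rewrite (negbTE k_r); apply: rst_refl.
Qed.

End Reversal.

End Rules.

End WeakConnectivity.

Theorem theorem5 (P : Type) (G G' : relay_graph P) :
  valid G -> weakly_connected G -> ifr_step G G' -> weakly_connected G'.
Proof.
case=> _ target_closed buffer_closed _ G_conn; case.
- by move=> *; apply: intro_result_weakly_connected.
- move=> u r r' _ _ n [r_in owner_r _] [_ owner_r' _] _ same_rr'.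
  move=> inc_r inc_r' n_fresh.
  exact: fuse_result_weakly_connected.
- move=> u r s v _ ns [r_in owner_r r_sink] [s_in owner_s _] r_neq_s inc_r.
  move=> size_ns uniq_ns ns_fresh.
  exact: (rev_result_weakly_connected _ _ r_in owner_r).
Qed.
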